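(* Let $\Omega\subset\{1,\dots,N\}$ have cardinality $n$, let $0<\epsilon<1$, and let $b\in\mathbb{R}^N$ and $c\in\mathbb{R}^{2N-1}$ be random vectors with independent Bernoulli $\pm1$ entries. Let $\mu$ be the coherence of the random partial circulant matrix $\frac{1}{\sqrt n}S^b_\Omega\in\mathbb{R}^{n\times N}$, or of the random partial Toeplitz matrix $\frac1{\sqrt n}T^c_\Omega\in\mathbb{R}^{n\times N}$. Then with probability at least $1-\epsilon$, $$\mu\le 4\,\frac{\log(2N^2/\epsilon)}{\sqrt n}.$$
   Context: For $b=(b_0,\dots,b_{N-1})\in\mathbb{R}^N$ the circulant matrix $S^b\in\mathbb{R}^{N\times N}$ has entries $S^b_{i,j}=b_{(j-i)\bmod N}$, $i,j=1,\dots,N$. For $c=(c_{-N+1},\dots,c_{N-1})\in\mathbb{R}^{2N-1}$ the Toeplitz matrix $T^c\in\mathbb{R}^{N\times N}$ has entries $T^c_{i,j}=c_{j-i}$. $S^b_\Omega$ (resp. $T^c_\Omega$) is the submatrix consisting of the rows indexed by $\Omega$. A Bernoulli $\pm1$ variable takes values $\pm1$ with probability $1/2$ each. The coherence of a matrix $A$ with columns $a_1,\dots,a_N$ is $\mu=\max_{\rho\neq\lambda}|\langle a_\rho,a_\lambda\rangle|$. *)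

From HB Require Import structures.
From mathcomp Require Import all_boot all_order all_algebra.
From mathcomp Require Import reals exp.
Set Implicit Arguments. Unset Strict Implicit. Unset Printing Implicit Defensive.
Import Order.TTheory GRing.Theory Num.Theory.
Local Open Scope ring_scope.

Definition pm1 {R : pzRingType} (x : bool) : R := if x then 1 else -1.

Definition circulant {R : pzRingType} (N : nat) (b : 'I_N -> R) : 'M[R]_N :=
  \matrix_(i, j) match insub ((j + N - i) %% N)%N with
                 | Some k => b k | None => 0 end.

(* Toeplitz matrix T^c with c = (c_{-N+1},...,c_{N-1}) stored as
   c' : 'I_(2N-1) -> R, c_k = c' (k + N - 1): T^c_{i,j} = c_{j-i}. *)
Definition toeplitz {R : pzRingType} (N : nat) (c : 'I_(2 * N - 1) -> R) : 'M[R]_N :=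
  \matrix_(i, j) match insub (j + N.-1 - i)%N with
                 | Some k => c k | None => 0 end.

Definition rows_of {R : Type} (N m : nat) (Omega : {set 'I_N}) (A : 'M[R]_(N, m))
  : 'M[R]_(#|Omega|, m) :=
  \matrix_(k, j) A (enum_val k) j.

Definition coherence {R : numDomainType} (m N : nat) (A : 'M[R]_(m, N)) : R :=
  \big[Num.max/0]_(rho < N) \big[Num.max/0]_(lam < N | lam != rho)
     `| \sum_(k < m) A k rho * A k lam |.

(* Probability of an event under independent uniform (fair) coordinates. *)
Definition unif_prob {R : numFieldType} (T : finType) (E : pred T) : R :=
  #|[set x | E x]|%:R / #|T|%:R.

From mathcomp Require Import all_boot all_order all_algebra.
From mathcomp Require Import reals exp sequences.
From mathcomp Require Import lra zify ring.

(* Every off-diagonal entry of the Gram matrix of the normalized matrix is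
   [n^-1] times a sum [Y] of at most [n] products of two distinct Bernoulli
   signs.  For the Toeplitz matrix, and for each of the two halves of the
   circulant sum (split by the half of [Z/N] containing the shift), every
   subfamily of terms has a term containing a sign that occurs nowhere else in
   the subfamily; flipping that sign peels the term off, which gives
   [E exp(l Y) = cosh(l)^#|P| <= exp(2 l^2 #|P|)] for [l^2 <= 1/2].  With
   [l = +-1/sqrt n] the Chernoff bound yields [P(|Y|/sqrt n > t) <= 2 e^(2-t)],
   and a union bound over the [N^2] pairs of columns with
   [t = 2 log(2N^2/eps)] gives the claim.  When the threshold is at least [1]
   there is nothing to prove, since every Gram entry is at most [1]. *)

Set Implicit Arguments. Unset Strict Implicit. Unset Printing Implicit Defensive.
Import Order.TTheory GRing.Theory Num.Theory.
Local Open Scope ring_scope.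

Section UniformProbability.
Context {R : realType} {T : finType}.
Implicit Types (E F : pred T) (f g : T -> R).

Definition unif_mean f : R := (\sum_x f x) / #|T|%:R.

Local Notation Pr := (@unif_prob R T).

Lemma unif_probE E : Pr E = unif_mean (fun x => (E x)%:R).
Proof.
rewrite /unif_prob /unif_mean; congr (_ / _).
rewrite -sumr_const big_mkcond /=; apply: eq_bigr => x _.
by rewrite inE; case: (E x).
Qed.

Lemma unif_mean_le f g : (forall x, f x <= g x) -> unif_mean f <= unif_mean g.
Proof. by move=> fg; apply: ler_wpM2r; [rewrite invr_ge0 | apply: ler_sum]. Qed.

Lemma unif_meanD f g : unif_mean (f \+ g) = unif_mean f + unif_mean g.
Proof. by rewrite /unif_mean big_split mulrDl. Qed.

Lemma unif_mean_sum (I : finType) (F : I -> T -> R) :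
  unif_mean (fun x => \sum_i F i x) = \sum_i unif_mean (F i).
Proof. by rewrite /unif_mean exchange_big mulr_suml. Qed.

Lemma unif_prob_le E F : (forall x, E x -> F x) -> Pr E <= Pr F.
Proof.
move=> EF; rewrite !unif_probE; apply: unif_mean_le => x.
by case: (boolP (E x)) => [/EF -> | _] //=; rewrite ler0n.
Qed.

Lemma unif_prob_eq0 E : (forall x, ~~ E x) -> Pr E = 0.
Proof.
by move=> nE; rewrite unif_probE /unif_mean big1 ?mul0r // => x _; rewrite (negbTE (nE x)).
Qed.

Lemma unif_probU_le E F :
  Pr (fun x => E x || F x) <= Pr E + Pr F.
Proof.
rewrite !unif_probE -unif_meanD; apply: unif_mean_le => x /=.
by case: (E x); case: (F x); rewrite /= ?addr0 ?add0r ?lerDl.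
Qed.

Lemma unif_prob_exists_le (I : finType) (E : I -> pred T) :
  Pr (fun x => [exists i, E i x]) <= \sum_i Pr (E i).
Proof.
under eq_bigr do rewrite unif_probE.
rewrite unif_probE -unif_mean_sum; apply: unif_mean_le => x.
case: existsP => [[i Ei] | _]; last by apply: sumr_ge0 => i _; rewrite ler0n.
rewrite (bigD1 i) //= Ei lerDl; apply: sumr_ge0 => j _; exact: ler0n.
Qed.

Lemma unif_probNE E : (0 < #|T|)%N -> Pr (fun x => ~~ E x) = 1 - Pr E.
Proof.
move=> T0; rewrite !unif_probE.
transitivity (unif_mean (fun=> 1) - unif_mean (fun x => (E x)%:R)).
  rewrite /unif_mean -mulrBl -sumrB; congr (_ / _); apply: eq_bigr => x _.
  by case: (E x); rewrite /= ?subrr ?subr0.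
by rewrite /unif_mean sumr_const divff // pnatr_eq0 -lt0n.
Qed.

Lemma unif_prob_lt_le_expR f a :
  Pr (fun x => a < f x) <= expR (- a) * unif_mean (fun x => expR (f x)).
Proof.
rewrite unif_probE /unif_mean mulrA mulr_sumr; apply: unif_mean_le => x.
rewrite -expRD; case: ltP => /= h; last exact: expR_ge0.
by apply: ltW; rewrite expR_gt1; lra.
Qed.

End UniformProbability.

Section Cosh.
Context {R : realType}.
Implicit Types l : R.

Definition coshR l := (expR l + expR (- l)) / 2.

Lemma coshR_ge0 l : 0 <= coshR l.
Proof. by apply: divr_ge0 => //; apply: addr_ge0; exact: expR_ge0. Qed.

(* From [expR l * (1 - l) <= 1] and [expR (- l) * (1 + l) <= 1]:
   [2 coshR l <= 2 / (1 - l^2) <= 2 + 4 l^2]. *)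
Lemma coshR_le l : l ^+ 2 <= 2^-1 -> coshR l <= 1 + 2 * l ^+ 2.
Proof.
move=> hl.
set A := expR l; set B := expR (- l).
have AB : A * B = 1 by exact: expRxMexpNx_1.
have A0 : 0 < A by exact: expR_gt0.
have B0 : 0 < B by exact: expR_gt0.
have hA : A * (1 - l) <= 1.
  by rewrite -[leRHS]AB; apply: ler_wpM2l; [lra | exact: (expR_ge1Dx (- l))].
have hB : B * (1 + l) <= 1.
  by rewrite -[leRHS]AB [A * B]mulrC; apply: ler_wpM2l; [lra | exact: (expR_ge1Dx l)].
have l1 : 0 < 1 - l ^+ 2 by lra.
have hAB : (A + B) * (1 - l ^+ 2) <= 2.
  have -> : (A + B) * (1 - l ^+ 2) = (A * (1 - l)) * (1 + l) + (B * (1 + l)) * (1 - l) by ring.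
  apply: le_trans (_ : 1 * (1 + l) + 1 * (1 - l) <= 2); last lra.
  by apply: lerD; apply: ler_wpM2r => //; nra.
suff : A + B <= 2 + 4 * l ^+ 2 by rewrite /coshR -/A -/B; lra.
rewrite -(ler_pM2r l1); apply: le_trans hAB _; nra.
Qed.

Lemma coshR_le_expR l : l ^+ 2 <= 2^-1 -> coshR l <= expR (2 * l ^+ 2).
Proof. by move=> hl; apply: le_trans (coshR_le hl) (expR_ge1Dx _). Qed.

End Cosh.

Section SignChaos.
Context {R : realType} {I J : finType}.
Local Notation X := {ffun I -> bool}.
Implicit Types (x : X) (P Q : {set J}) (u w : J -> I).

Lemma card_sign_vectors_gt0 : (0 < #|X|)%N.
Proof. by apply/card_gt0P; exists [ffun=> true]. Qed.

Definition sign x i : R := pm1 (x i).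

Definition flip (i0 : I) x : X := [ffun i => if i == i0 then ~~ x i else x i].

Lemma flipK i0 : involutive (flip i0).
Proof. by move=> x; apply/ffunP=> i; rewrite !ffunE; case: eqP => // _; rewrite negbK. Qed.

Lemma sign_flip i0 x i : sign (flip i0 x) i = if i == i0 then - sign x i else sign x i.
Proof. by rewrite /sign ffunE; case: eqP => // _; case: (x i); rewrite /pm1 ?opprK. Qed.

Lemma sign_mul_pm1 x i i' : sign x i * sign x i' = 1 \/ sign x i * sign x i' = -1.
Proof.
by rewrite /sign /pm1; case: (x i); case: (x i'); rewrite ?mulr1 ?mulrN1 ?opprK; auto.
Qed.

Definition chaos P u w x : R := \sum_(j in P) sign x (u j) * sign x (w j).

Lemma chaos_norm_le P u w x : `|chaos P u w x| <= #|P|%:R.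
Proof.
apply: le_trans (ler_norm_sum _ _ _) _; rewrite -sumr_const; apply: ler_sum => j _.
by case: (sign_mul_pm1 x (u j) (w j)) => ->; rewrite ?normrN normr1.
Qed.

Definition peel_index P u w j :=
  forall k, k \in P -> (w j != u k) && ((k != j) ==> (w j != w k)).

Definition peelable P u w :=
  forall Q, Q \subset P -> Q != set0 -> exists2 j, j \in Q & peel_index Q u w j.

Lemma peelable_sub P Q u w : Q \subset P -> peelable P u w -> peelable Q u w.
Proof. by move=> QP hP Q' sQ'; apply: hP; exact: subset_trans QP. Qed.

(* Flipping the coordinate [w j] negates the term [j] and leaves the others fixed. *)
Lemma sum_expR_chaosD1 P u w j l : j \in P -> peel_index P u w j ->
  \sum_x expR (l * chaos P u w x) = coshR l * \sum_x expR (l * chaos (P :\ j) u w x).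
Proof.
move=> jP hj.
pose a x := sign x (u j) * sign x (w j).
have chaosD1 x : chaos P u w x = a x + chaos (P :\ j) u w x.
  by rewrite /chaos (bigD1 j) //=; congr (_ + _); apply: eq_bigl => i; rewrite !inE andbC.
have chaos_flip x : chaos (P :\ j) u w (flip (w j) x) = chaos (P :\ j) u w x.
  apply: eq_bigr => i; rewrite !inE => /andP[ij iP].
  have /andP[h1 h2] := hj i iP; rewrite ij /= in h2.
  by rewrite !sign_flip eq_sym (negbTE h1) eq_sym (negbTE h2).
have a_flip x : a (flip (w j) x) = - a x.
  have /andP[h1 _] := hj j jP.
  by rewrite /a !sign_flip eqxx eq_sym (negbTE h1) mulrN.
have a_cosh x : expR (l * a x) + expR (- l * a x) = 2 * coshR l.
  rewrite /coshR [RHS]mulrC divfK ?pnatr_eq0 //.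
  by rewrite /a; case: (sign_mul_pm1 x (u j) (w j)) => ->; rewrite ?mulr1 ?mulrN1 ?opprK // addrC.
set S := \sum_x expR (l * chaos P u w x).
have S_flip : S = \sum_x expR (- l * a x) * expR (l * chaos (P :\ j) u w x).
  rewrite /S (reindex_inj (inv_inj (flipK (w j)))) /=.
  by apply: eq_bigr => x _; rewrite chaosD1 chaos_flip a_flip -expRD; congr expR; ring.
have S_id : S = \sum_x expR (l * a x) * expR (l * chaos (P :\ j) u w x).
  by apply: eq_bigr => x _; rewrite chaosD1 -expRD mulrDr.
have : S + S = 2 * coshR l * \sum_x expR (l * chaos (P :\ j) u w x).
  rewrite {1}S_id S_flip -big_split big_distrr /=; apply: eq_bigr => x _.
  by rewrite -mulrDl a_cosh.
move=> SS; apply: (@mulfI _ 2); first by rewrite pnatr_eq0.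
by rewrite mulrA -SS; ring.
Qed.

Lemma sum_expR_chaos P u w l : peelable P u w ->
  \sum_x expR (l * chaos P u w x) = #|X|%:R * coshR l ^+ #|P|.
Proof.
elim: {P}_.+1 {-2}P (ltnSn #|P|) => // k IH P Pk hP.
have [->|nP] := eqVneq P set0.
  rewrite cards0 expr0 mulr1 -sumr_const; apply: eq_bigr => x _.
  by rewrite /chaos big_set0 mulr0 expR0.
have [j jP hj] := hP P (subxx P) nP.
have Pj : (#|P :\ j| < k)%N by move: Pk; rewrite (cardsD1 j) jP.
rewrite (sum_expR_chaosD1 _ jP hj) IH //; last by apply: peelable_sub hP; exact: subsetDl.
by rewrite [in RHS](cardsD1 j) jP exprS; ring.
Qed.

Lemma unif_mean_expR_chaos P u w l : peelable P u w ->
  unif_mean (fun x : X => expR (l * chaos P u w x)) = coshR l ^+ #|P|.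
Proof.
move=> hP; rewrite /unif_mean sum_expR_chaos // mulrC mulKf //.
by rewrite pnatr_eq0 -lt0n card_sign_vectors_gt0.
Qed.

End SignChaos.

Section ChaosTail.
Context {R : realType} {I J : finType}.
Local Notation X := {ffun I -> bool}.

Lemma chaos_tail (P : {set J}) (u w : J -> I) (n : nat) (a : R) :
  peelable P u w -> (#|P| <= n)%N -> (2 <= n)%N ->
  unif_prob (fun x : X => a < `|chaos P u w x| / Num.sqrt n%:R) <= 2 * expR (2 - a).
Proof.
move=> hP Pn n2; set s := Num.sqrt n%:R.
have n0 : (0 : R) < n%:R by rewrite ltr0n (leq_trans _ n2).
have s0 : 0 < s by rewrite sqrtr_gt0.
have one_sided l : l ^+ 2 = n%:R^-1 ->
    unif_prob (fun x : X => a < l * chaos P u w x) <= expR (2 - a).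
  move=> hl; apply: le_trans (unif_prob_lt_le_expR _ _) _.
  rewrite unif_mean_expR_chaos // expRD mulrC; apply: ler_wpM2r; first exact: expR_ge0.
  have l2 : l ^+ 2 <= 2^-1 by rewrite hl lef_pV2 ?posrE ?ler_nat.
  apply: le_trans (lerXn2r _ _ _ (coshR_le_expR l2)) _; rewrite ?nnegrE ?coshR_ge0 ?expR_ge0 //.
  rewrite -expRM_natl ler_expR hl mulrCA -[leRHS]mulr1; apply: ler_wpM2l => //.
  by rewrite ler_pdivrMr // mul1r ler_nat.
apply: le_trans (unif_prob_le (F := fun x : X =>
    (a < s^-1 * chaos P u w x) || (a < - s^-1 * chaos P u w x)) _) _.
  by move=> x; rewrite mulrC -[X in X * `|_|]ger0_norm ?invr_ge0 ?ltW // -normrM ltr_normr mulNr.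
apply: le_trans (unif_probU_le _ _) _; rewrite mulr_natl mulr2n.
have hs : s^-1 ^+ 2 = n%:R^-1 by rewrite exprVn sqr_sqrtr // ltW.
by apply: lerD; apply: one_sided; rewrite ?sqrrN.
Qed.

End ChaosTail.

Lemma coherence_le {R : realDomainType} (m N : nat) (M : 'M[R]_(m, N)) (B : R) :
  0 <= B -> (forall r l : 'I_N, r != l -> `|\sum_(k < m) M k r * M k l| <= B) ->
  coherence M <= B.
Proof.
move=> B0 hM; apply: (big_ind (fun v => v <= B)) => // [a b ha hb|r _].
  by rewrite ge_max ha hb.
apply: (big_ind (fun v => v <= B)) => // [a b ha hb|l lr].
  by rewrite ge_max ha hb.
by apply: hM; rewrite eq_sym.
Qed.

Section ExpBounds.
Context {R : realType}.

(* [expR (1/2) <= 2] because [expR (1/2) * (1 - 1/2) <= expR (1/2) * expR (-1/2) = 1]. *)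
Lemma expR1_le4 : expR 1 <= 4 :> R.
Proof.
set h : R := 2^-1.
have ha : 0 < expR h by exact: expR_gt0.
have h2 : expR h <= 2.
  have : expR h * (1 - h) <= expR h * expR (- h).
    by apply: ler_wpM2l; [exact: ltW | exact: expR_ge1Dx].
  by rewrite expRxMexpNx_1 /h; lra.
have -> : expR 1 = expR h * expR h by rewrite -expRD /h; congr expR; field.
have : expR h * expR h <= 2 * 2 by apply: ler_pM => //; exact: ltW.
lra.
Qed.

Lemma union_bound_le_eps (N : nat) (eps : R) : (4 <= N)%N -> 0 < eps -> eps < 1 ->
  N%:R ^+ 2 * (4 * expR (2 - 2 * ln (2 * N%:R ^+ 2 / eps))) <= eps.
Proof.
move=> N4 e0 e1; set q := 2 * N%:R ^+ 2 / eps.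
have N4r : (4 : R) <= N%:R by rewrite ler_nat.
have q0 : 0 < q by apply: divr_gt0 => //; apply: mulr_gt0 => //; apply: exprn_gt0; lra.
have e2 : expR 2 <= 16 :> R.
  have -> : (2 : R) = 2%:R * 1 by rewrite mulr1.
  by rewrite expRM_natl expr2; have := expR1_le4; have := expR_gt0 (1 : R); nra.
have -> : expR (2 - 2 * ln q) = expR 2 / q ^+ 2.
  by rewrite expRD expRN -[2 * ln q]/(2%:R * ln q) expRM_natl lnK.
have -> : N%:R ^+ 2 * (4 * (expR 2 / q ^+ 2)) = expR 2 * eps ^+ 2 / N%:R ^+ 2.
  by rewrite /q; field; apply/andP; split; rewrite gt_eqF //; lra.
rewrite ler_pdivrMr; last by apply: exprn_gt0; lra.
have eps2 : eps ^+ 2 <= eps by rewrite expr2; nra.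
have N16 : 16 <= N%:R ^+ 2 :> R by rewrite expr2; nra.
apply: le_trans (ler_wpM2l (expR_ge0 2) eps2) _; nra.
Qed.

End ExpBounds.

Section CoherenceTail.
Context {R : realType}.

Lemma unif_prob_coherence_gt_le (T : finType) (m N : nat) (A : T -> 'M[R]_(m, N)) (B c : R) :
  0 <= B -> 0 <= c ->
  (forall r l : 'I_N, r != l ->
     unif_prob (fun x => B < `|\sum_(k < m) A x k r * A x k l|) <= c) ->
  unif_prob (fun x => ~~ (coherence (A x) <= B)) <= N%:R ^+ 2 * c.
Proof.
move=> B0 c0 hA.
pose bad x (p : 'I_N * 'I_N) := (p.1 != p.2) && (B < `|\sum_(k < m) A x k p.1 * A x k p.2|).
apply: le_trans (unif_prob_le (F := fun x => [exists p, bad x p]) _) _.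
  move=> x; apply: contraR => /existsPn nbad; apply: coherence_le => // r l rl.
  by have := nbad (r, l); rewrite /bad /= rl /= -leNgt.
apply: le_trans (unif_prob_exists_le _) _.
apply: (@le_trans _ _ (\sum_(p : 'I_N * 'I_N) c)).
  apply: ler_sum => -[r l] _ /=; have [<-|rl] := eqVneq r l.
    by rewrite unif_prob_eq0 // => x; rewrite /bad /= eqxx.
  by apply: le_trans (hA r l rl); apply: unif_prob_le => x /andP[].
by rewrite sumr_const card_prod card_ord -[c *+ _]mulr_natl natrM -expr2.
Qed.

Variables (I J : finType).
Local Notation X := {ffun I -> bool}.

Definition gram_chaos_split (m N n : nat) (A : X -> 'M[R]_(m, N)) :=
  forall r l : 'I_N, r != l ->
  exists P1 : {set J}, exists u1 w1, exists P2 : {set J}, exists u2 w2,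
  [/\ peelable P1 u1 w1, peelable P2 u2 w2, (#|P1| + #|P2| <= n)%N &
      forall x, \sum_(k < m) A x k r * A x k l
                = n%:R^-1 * (chaos P1 u1 w1 x + chaos P2 u2 w2 x)].

Lemma gram_chaos_split_norm_le1 (m N n : nat) (A : X -> 'M[R]_(m, N)) (r l : 'I_N) x :
  gram_chaos_split n A -> r != l -> `|\sum_(k < m) A x k r * A x k l| <= 1.
Proof.
move=> hA rl; have [P1 [u1 [w1 [P2 [u2 [w2 [_ _ hP ->]]]]]]] := hA r l rl.
rewrite normrM ger0_norm ?invr_ge0 //; have [->|n0] := posnP n; first by rewrite invr0 mul0r.
rewrite ler_pdivrMl ?ltr0n // mulr1; apply: le_trans (ler_normD _ _) _.
apply: le_trans (lerD (chaos_norm_le _ _ _ _) (chaos_norm_le _ _ _ _)) _.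
by rewrite -natrD ler_nat.
Qed.

Lemma gram_chaos_split_tail (m N n : nat) (A : X -> 'M[R]_(m, N)) (r l : 'I_N) (L : R) :
  gram_chaos_split n A -> r != l -> (2 <= n)%N ->
  unif_prob (fun x => 4 * L / Num.sqrt n%:R < `|\sum_(k < m) A x k r * A x k l|)
  <= 4 * expR (2 - 2 * L).
Proof.
move=> hA rl n2; have [P1 [u1 [w1 [P2 [u2 [w2 [hP1 hP2 hP hx]]]]]]] := hA r l rl.
set s := Num.sqrt n%:R.
have n0 : (0 : R) < n%:R by rewrite ltr0n (leq_trans _ n2).
have s0 : 0 < s by rewrite sqrtr_gt0.
have ss : n%:R = s * s by rewrite -expr2 sqr_sqrtr // ltW.
apply: le_trans (unif_prob_le (F := fun x => (2 * L < `|chaos P1 u1 w1 x| / s)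
                                           || (2 * L < `|chaos P2 u2 w2 x| / s)) _) _.
  move=> x; set y1 := chaos P1 u1 w1 x; set y2 := chaos P2 u2 w2 x.
  rewrite hx normrM ger0_norm ?invr_ge0 ?ltW // ltr_pdivrMr // ss.
  have -> : (s * s)^-1 * `|y1 + y2| * s = `|y1 + y2| / s by field; rewrite gt_eqF.
  move=> h; have : 4 * L < `|y1| / s + `|y2| / s.
    apply: lt_le_trans h _; rewrite -mulrDl.
    by apply: ler_wpM2r; [rewrite invr_ge0 ltW | exact: ler_normD].
  by case: ltP => //= h1; case: ltP => //= h2; lra.
apply: le_trans (unif_probU_le _ _) _.
have -> : 4 * expR (2 - 2 * L) = 2 * expR (2 - 2 * L) + 2 * expR (2 - 2 * L) by ring.
by apply: lerD; apply: chaos_tail => //; apply: leq_trans hP; rewrite ?leq_addr ?leq_addl.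
Qed.

Lemma coherence_tail (m N n : nat) (A : X -> 'M[R]_(m, N)) (eps : R) :
  (n <= N)%N -> 0 < eps -> eps < 1 -> gram_chaos_split n A ->
  1 - eps <= unif_prob (fun x =>
    coherence (A x) <= 4 * ln (2 * N%:R ^+ 2 / eps) / Num.sqrt n%:R).
Proof.
move=> nN e0 e1 hA; set L := ln _; set s := Num.sqrt _; set B := 4 * L / s.
suff : unif_prob (fun x => ~~ (coherence (A x) <= B)) <= eps.
  by rewrite unif_probNE ?card_sign_vectors_gt0 //; lra.
have L0 : 0 <= L.
  rewrite /L; have [->|N0] := posnP N; first by rewrite ln0 // mulr0n expr0n mulr0 mul0r.
  apply: ln_ge0; rewrite ler_pdivlMr // mul1r.
  have N1 : (1 : R) <= N%:R by rewrite ler1n.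
  by rewrite expr2; nra.
have s0 : 0 <= s by exact: sqrtr_ge0.
have B0 : 0 <= B by rewrite /B divr_ge0 ?mulr_ge0.
have [triv|] := boolP [|| (N <= 1)%N, n == 0%N | 1 <= B].
  apply: le_trans (unif_prob_coherence_gt_le (c := 0) B0 (lexx 0) _) _; last by rewrite mulr0 ltW.
  move=> r l rl; rewrite unif_prob_eq0 // => x; rewrite -leNgt.
  case/or3P: triv => [N1 | /eqP n0 | B1].
  - by exfalso; move/eqP: rl; apply; apply: ord_inj; move: (ltn_ord r) (ltn_ord l); lia.
  - have [P1 [u1 [w1 [P2 [u2 [w2 [_ _ _ ->]]]]]]] := hA r l rl.
    by rewrite n0 invr0 mul0r normr0.
  - exact: le_trans (gram_chaos_split_norm_le1 x hA rl) B1.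
(* Otherwise [B < 1] forces [sqrt n > 4 L > 4], so [n] and [N] exceed [16]. *)
case/norP=> [N2 /norP[n0 B1]]; rewrite -ltnNge in N2; rewrite -ltNge in B1.
have n0r : (0 : R) < n%:R by rewrite ltr0n lt0n.
have sp : 0 < s by rewrite sqrtr_gt0.
have N2r : (2 : R) <= N%:R by rewrite ler_nat.
have L1 : 1 < L.
  rewrite -ltr_expR lnK ?posrE; last first.
    by apply: divr_gt0 => //; apply: mulr_gt0 => //; apply: exprn_gt0; lra.
  apply: le_lt_trans expR1_le4 _; rewrite ltr_pdivlMr // expr2; nra.
have s4 : 4 < s by move: B1; rewrite /B ltr_pdivrMr // mul1r; lra.
have n16 : (16 < n)%N.
  by rewrite -(ltr_nat R) -[n%:R]sqr_sqrtr ?ler0n // -/s expr2; nra.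
apply: le_trans (unif_prob_coherence_gt_le (c := 4 * expR (2 - 2 * L)) B0 _ _) _.
- by rewrite mulr_ge0 ?expR_ge0.
- by move=> r l rl; apply: gram_chaos_split_tail hA rl _; lia.
- by apply: union_bound_le_eps => //; lia.
Qed.

End CoherenceTail.

Section CyclicDifferences.
Local Open Scope nat_scope.

Lemma cyclic_diffE N (a k : 'I_N) :
  (a + N - k) %% N = if k <= a then a - k else a + N - k.
Proof.
have := ltn_ord a; case: (leqP k a) => h aN; last by rewrite modn_small //; lia.
have -> : a + N - k = a - k + N by lia.
by rewrite modnDr modn_small //; lia.
Qed.

Lemma cyclic_diff_inj N (l j k : 'I_N) : (l + N - j) %% N = (l + N - k) %% N -> j = k.
Proof.
rewrite !cyclic_diffE => h; apply: ord_inj; move: h.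
have := ltn_ord l; have := ltn_ord j; have := ltn_ord k.
by case: (leqP j l); case: (leqP k l) => *; lia.
Qed.

(* With [d := (l - r) mod N], the sought condition says that the shift [r - j]
   moved by [d] misses every shift [r - k].  All shifts lie in one half of
   [Z/N]; take [j] with the largest shift if [d <= N/2] and the smallest
   otherwise, so that adding [d] leaves the half or jumps below the minimum. *)
Lemma cyclic_diff_peel N (r l : 'I_N) (Q : {set 'I_N}) (up : bool) :
  r != l -> Q != set0 -> (forall k, k \in Q -> (2 * ((r + N - k) %% N) < N) = up) ->
  exists2 j, j \in Q & forall k, k \in Q -> (l + N - j) %% N != (r + N - k) %% N.
Proof.
move=> rl /set0Pn [j0 j0Q] hQ.
have rl' : (r : nat) <> l by move=> e; move/eqP: rl; apply; apply: ord_inj.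
have hr := ltn_ord r; have hl := ltn_ord l.
have [hd|hd] := leqP (2 * ((l + N - r) %% N)) N.
  have [j jQ jmax] := @arg_maxnP _ j0 (mem Q) (fun j => (r + N - j) %% N) j0Q.
  exists j => // k kQ; have hm := jmax k kQ.
  have hj := hQ j jQ; have hk := hQ k kQ; have := ltn_ord j; have := ltn_ord k.
  move: hj hk hm hd; rewrite !cyclic_diffE; clear hQ jmax.
  case: up => [hj hk | /negbT hj /negbT hk] hm hd; move: hj hk hm hd;
  case: (leqP j r); case: (leqP j l); case: (leqP k r); case: (leqP r l) => *;
  apply/eqP; lia.
have [j jQ jmin] := @arg_minnP _ j0 (mem Q) (fun j => (r + N - j) %% N) j0Q.
exists j => // k kQ; have hm := jmin k kQ.
have hj := hQ j jQ; have hk := hQ k kQ; have := ltn_ord j; have := ltn_ord k.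
move: hj hk hm hd; rewrite !cyclic_diffE; clear hQ jmin.
case: up => [hj hk | /negbT hj /negbT hk] hm hd; move: hj hk hm hd;
case: (leqP j r); case: (leqP j l); case: (leqP k r); case: (leqP r l) => *;
apply/eqP; lia.
Qed.

(* Take the smallest index if [r < l] and the largest otherwise. *)
Lemma toeplitz_diff_peel N (r l : 'I_N) (Q : {set 'I_N}) :
  r != l -> Q != set0 ->
  exists2 j, j \in Q & forall k, k \in Q -> l + N.-1 - j != r + N.-1 - k.
Proof.
move=> rl /set0Pn [j0 j0Q].
have rl' : (r : nat) <> l by move=> e; move/eqP: rl; apply; apply: ord_inj.
have hr := ltn_ord r; have hl := ltn_ord l.
have [hd|hd] := ltnP r l.
  have [j jQ jmin] := @arg_minnP _ j0 (mem Q) (@nat_of_ord N) j0Q.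
  exists j => // k kQ; have := jmin k kQ; have := ltn_ord j; have := ltn_ord k.
  by move=> *; apply/eqP; lia.
have [j jQ jmax] := @arg_maxnP _ j0 (mem Q) (@nat_of_ord N) j0Q.
exists j => // k kQ; have := jmax k kQ; have := ltn_ord j; have := ltn_ord k.
by move=> *; apply/eqP; lia.
Qed.

End CyclicDifferences.

Section Instances.
Context {R : realType}.

Lemma circulantE N (f : 'I_N -> R) (i j : 'I_N) :
  circulant f i j = f (insubd j ((j + N - i) %% N)%N).
Proof.
rewrite /circulant mxE; case: insubP => [k hk ek | hn].
  by congr f; apply: val_inj; rewrite val_insubd ek /= hk.
by move: hn; rewrite ltn_pmod // (leq_ltn_trans (leq0n _) (ltn_ord i)).
Qed.

Lemma toeplitzE N (c : 'I_(2 * N - 1) -> R) (x0 : 'I_(2 * N - 1)) (i j : 'I_N) :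
  toeplitz c i j = c (insubd x0 (j + N.-1 - i)%N).
Proof.
rewrite /toeplitz mxE; case: insubP => [k hk ek | /negP[]].
  by congr c; apply: val_inj; rewrite val_insubd ek /= hk.
by have := ltn_ord i; have := ltn_ord j; lia.
Qed.

Lemma rows_of_scale_gram N m (Omega : {set 'I_N}) (M : 'M[R]_(N, m)) (a : R) (r l : 'I_m) :
  \sum_(k < #|Omega|) (a *: rows_of Omega M) k r * (a *: rows_of Omega M) k l
   = a ^+ 2 * \sum_(o in Omega) M o r * M o l.
Proof.
rewrite [in RHS]big_enum_val big_distrr /=.
by apply: eq_bigr => k _; rewrite !mxE; ring.
Qed.

(* The sum over [Omega] is split according to whether the cyclic shift [r - o]
   lies in the lower or the upper half of [Z/N]; each half is peelable. *)
Lemma circulant_gram_chaos_split N n (Omega : {set 'I_N}) : #|Omega| = n ->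
  gram_chaos_split 'I_N n (fun b : {ffun 'I_N -> bool} =>
     (Num.sqrt (n%:R : R))^-1 *: rows_of Omega (circulant (fun k => pm1 (b k) : R))).
Proof.
move=> hn r l rl.
have N0 : (0 < N)%N by exact: (leq_ltn_trans (leq0n _) (ltn_ord r)).
pose u (o : 'I_N) := insubd r ((r + N - o) %% N)%N.
pose w (o : 'I_N) := insubd l ((l + N - o) %% N)%N.
have uE o : val (u o) = ((r + N - o) %% N)%N by rewrite val_insubd ltn_pmod.
have wE o : val (w o) = ((l + N - o) %% N)%N by rewrite val_insubd ltn_pmod.
pose C := [set o : 'I_N | (2 * ((r + N - o) %% N) < N)%N].
have half_peelable up (P : {set 'I_N}) :
    (forall k, k \in P -> (2 * ((r + N - k) %% N) < N)%N = up) -> peelable P u w.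
  move=> hP Q sQ nQ.
  have [j jQ hj] := cyclic_diff_peel (up := up) rl nQ (fun k kQ => hP k (subsetP sQ k kQ)).
  exists j => // k kQ; apply/andP; split.
    by apply/eqP => /(congr1 val); rewrite uE wE; apply/eqP; exact: hj.
  apply/implyP => kj; apply/eqP => /(congr1 val); rewrite !wE => /cyclic_diff_inj e.
  by move: kj; rewrite e eqxx.
exists (Omega :&: C), u, w, (Omega :\: C), u, w; split.
- by apply: (half_peelable true) => k; rewrite !inE => /andP[_ ->].
- by apply: (half_peelable false) => k; rewrite !inE => /andP[/negbTE -> _].
- by rewrite cardsID hn.
move=> x; rewrite rows_of_scale_gram exprVn sqr_sqrtr ?ler0n // (big_setID C) /=.
by congr (_ * (_ + _)); apply: eq_bigr => o _; rewrite !circulantE.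
Qed.

Lemma toeplitz_gram_chaos_split N n (Omega : {set 'I_N}) : #|Omega| = n ->
  gram_chaos_split 'I_N n (fun c : {ffun 'I_(2 * N - 1) -> bool} =>
     (Num.sqrt (n%:R : R))^-1 *: rows_of Omega (toeplitz (fun k => pm1 (c k) : R))).
Proof.
move=> hn r l rl.
have hN : (0 < 2 * N - 1)%N by have := ltn_ord r; lia.
pose x0 : 'I_(2 * N - 1) := Ordinal hN.
pose u (o : 'I_N) := insubd x0 (r + N.-1 - o)%N.
pose w (o : 'I_N) := insubd x0 (l + N.-1 - o)%N.
have uE o : val (u o) = (r + N.-1 - o)%N.
  by rewrite val_insubd; have := ltn_ord r; have := ltn_ord o; case: ifP => //; lia.
have wE o : val (w o) = (l + N.-1 - o)%N.
  by rewrite val_insubd; have := ltn_ord l; have := ltn_ord o; case: ifP => //; lia.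
exists Omega, u, w, set0, u, w; split.
- move=> Q sQ nQ; have [j jQ hj] := toeplitz_diff_peel rl nQ.
  exists j => // k kQ; apply/andP; split.
    by apply/eqP => /(congr1 val); rewrite uE wE; apply/eqP; exact: hj.
  apply/implyP => kj; apply/eqP => /(congr1 val); rewrite !wE => e.
  move/eqP: kj; apply; apply: ord_inj; move: e.
  by have := ltn_ord l; have := ltn_ord j; have := ltn_ord k; lia.
- by move=> Q; rewrite subset0 => /eqP ->; rewrite eqxx.
- by rewrite cards0 addn0 hn.
move=> x; rewrite rows_of_scale_gram exprVn sqr_sqrtr ?ler0n // /chaos big_set0 addr0.
by congr (_ * _); apply: eq_bigr => o _; rewrite !(toeplitzE _ x0).
Qed.

End Instances.

Unset Implicit Arguments.

Theorem proposition3 (R : realType) (N n : nat) (Omega : {set 'I_N}) (eps : R) :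
  #|Omega| = n -> 0 < eps -> eps < 1 ->
  1 - eps <= unif_prob (T := {ffun 'I_N -> bool}) (fun b =>
     coherence ((Num.sqrt (n%:R : R))^-1 *:
                rows_of Omega (circulant (fun k => pm1 (b k) : R)))
     <= 4 * ln (2 * (N%:R) ^+ 2 / eps) / Num.sqrt (n%:R))
  /\
  1 - eps <= unif_prob (T := {ffun 'I_(2 * N - 1) -> bool}) (fun c =>
     coherence ((Num.sqrt (n%:R : R))^-1 *:
                rows_of Omega (toeplitz (fun k => pm1 (c k) : R)))
     <= 4 * ln (2 * (N%:R) ^+ 2 / eps) / Num.sqrt (n%:R)).
Proof.
move=> hn e0 e1.
have nN : (n <= N)%N by rewrite -hn -[X in (_ <= X)%N]card_ord max_card.
split; apply: coherence_tail => //.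
  exact: circulant_gram_chaos_split.
exact: toeplitz_gram_chaos_split.
Qed.
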